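(* In the general setting of the context, for every $h\in\{0,1,\dots,L-1\}$, $$\mathbb{P}(P_h<P^* )\le\exp\Big(-\frac{\epsilon^2}{4\gamma}\Big)+m\exp\Big(-\frac{\epsilon^2}{6\gamma}\Big).$$
   Context: General setting. Let $m,k,n$ be positive integers and $b\in\mathbb{R}^m_{++}$. Let $\mathcal G$ be the set of proper, concave, upper semicontinuous functions $f:\mathbb{R}^k\to[-\infty,\infty)$ with bounded superlevel sets such that $\mathrm{dom} f\subset\mathbb{R}^k_+$ and $f(0)=0$. Let $f_1,\dots,f_n\in\mathcal G$ and $A_1,\dots,A_n\in\mathbb{R}_+^{m\times k}$. Let $P^*=\sup\{\sum_{t=1}^n f_t(x_t): x_t\in\mathbb{R}^k,\ \sum_{t=1}^n A_tx_t\le b\}$ and assume $P^*>0$. Let $\gamma>0$ satisfy, for every $t\in[n]$: $(A_tx)_i/b_i\le\gamma$ for all $i\in[m]$ and all $x$ with $f_t(x)\ge0$, and $f_t(x)\le\gamma P^*$ for all $x\in\mathrm{dom} f_t$. Let $\epsilon\in(0,1)$ be such that $L=\log_2(1/\epsilon)$ and $n\epsilon$ are integers. Let $\sigma$ be a uniformly random permutation of $[n]$; probabilities are over $\sigma$. For $h\in\{0,\dots,L-1\}$ let $\theta_h=2^{-(h+1)/2}\epsilon^{1/2}$ and $$P_h=\sup\Big\{\tfrac{1}{2^h\epsilon(1-\theta_h)}\sum_{t=1}^{2^hn\epsilon}f_{\sigma(t)}(x_t)\ :\ x_t\in\mathbb{R}^k,\ \tfrac{1}{2^h\epsilon(1+\theta_h)}\sum_{t=1}^{2^hn\epsilon}A_{\sigma(t)}x_t\le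 b\Big\}.$$ *)

From mathcomp Require Import all_boot fingroup perm.
From Stdlib Require Import Reals ClassicalEpsilon.

Set Implicit Arguments.
Unset Strict Implicit.
Unset Printing Implicit Defensive.

Open Scope R_scope.

Definition pbool (P : Prop) : bool :=
  if excluded_middle_informative P then true else false.

Definition Vec (k : nat) := 'I_k -> R.
Definition Mat (m k : nat) := 'I_m -> 'I_k -> R.

Notation "\rsum_ ( i < n | P ) F" := (\big[Rplus/R0]_(i < n | P%B) F%R)
  (at level 41, F at level 41, i, n at level 50) : R_scope.
Notation "\rsum_ ( i < n ) F" := (\big[Rplus/R0]_(i < n) F%R)
  (at level 41, F at level 41, i, n at level 50) : R_scope.

Definition mv (m k : nat) (A : Mat m k) (x : Vec k) (i : 'I_m) : R :=
  \rsum_(j < k) (A i j * x j).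

Definition closed_set (k : nat) (S : Vec k -> Prop) : Prop :=
  forall x : Vec k,
    (forall eps, 0 < eps -> exists y, S y /\ forall j, Rabs (y j - x j) < eps) ->
    S x.

Definition bounded_set (k : nat) (S : Vec k -> Prop) : Prop :=
  exists M : R, forall x, S x -> forall j, Rabs (x j) <= M.

(* An extended-valued function f : R^k -> [-oo, oo) is represented by its
   effective domain [dom] (the set where f > -oo) together with its
   (real) values [f] on [dom]; outside [dom] the function equals -oo and
   the values of [f] there are irrelevant. *)

Definition concave_ext (k : nat) (dom : Vec k -> Prop) (f : Vec k -> R) : Prop :=
  forall x y : Vec k, dom x -> dom y -> forall l, 0 <= l <= 1 ->
    let z := fun j => l * x j + (1 - l) * y j in
    dom z /\ l * f x + (1 - l) * f y <= f z.

Definition superlevel (k : nat) (dom : Vec k -> Prop) (f : Vec k -> R) (a : R)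
  : Vec k -> Prop := fun x => dom x /\ a <= f x.

Definition in_G (k : nat) (dom : Vec k -> Prop) (f : Vec k -> R) : Prop :=
  (* proper (never +oo by construction; not identically -oo) *)
  (exists x, dom x) /\
  concave_ext dom f /\
  (* upper semicontinuous: all superlevel sets closed *)
  (forall a, closed_set (superlevel dom f a)) /\
  (forall a, bounded_set (superlevel dom f a)) /\
  (forall x, dom x -> forall j, 0 <= x j) /\
  dom (fun _ => 0) /\ f (fun _ => 0) = 0.

Definition offline_values (m k n : nat) (dom : 'I_n -> Vec k -> Prop)
  (f : 'I_n -> Vec k -> R) (A : 'I_n -> Mat m k) (b : 'I_m -> R) : R -> Prop :=
  fun v => exists x : 'I_n -> Vec k,
    (forall t, dom t (x t)) /\
    (forall i, \rsum_(t < n) mv (A t) (x t) i <= b i) /\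
    v = \rsum_(t < n) f t (x t).

Definition theta (eps : R) (h : nat) : R := sqrt (eps / 2 ^ (h + 1)).

(* Set of objective values of feasible points of the sampled problem P_h
   (for the permutation sigma); the sample is the first T = 2^h n eps
   positions t = 0, ..., T-1 (0-based) of sigma. *)
Definition sample_values (m k n : nat) (dom : 'I_n -> Vec k -> Prop)
  (f : 'I_n -> Vec k -> R) (A : 'I_n -> Mat m k) (b : 'I_m -> R)
  (eps : R) (h : nat) (sigma : 'S_n) : R -> Prop :=
  fun v => exists x : 'I_n -> Vec k,
    let T := 2 ^ h * INR n * eps in
    (forall t : 'I_n, INR t < T -> dom (sigma t) (x t)) /\
    (forall i, / (2 ^ h * eps * (1 + theta eps h)) *
         (\rsum_(t < n | pbool (INR t < T)) mv (A (sigma t)) (x t) i) <= b i) /\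
    v = / (2 ^ h * eps * (1 - theta eps h)) *
         (\rsum_(t < n | pbool (INR t < T)) f (sigma t) (x t)).

(* sup S < c  (sup taken in the extended reals) *)
Definition sup_lt (S : R -> Prop) (c : R) : Prop :=
  exists c', c' < c /\ forall v, S v -> v <= c'.

Definition prob_perm (n : nat) (E : 'S_n -> Prop) : R :=
  INR #|[set s : 'S_n | pbool (E s)]| / INR #|[set: 'S_n]|.

(* Fix an offline solution x that is feasible, has nonnegative values and total
   value v close to P*.  Used on the sampled prefix of sigma (rescaled as in P_h),
   x is feasible for P_h with value at least v, unless the sampled value falls below
   (1 - theta_h) times its mean or some sampled resource consumption exceeds
   (1 + theta_h) times its mean.  Both are tail events for a sum over a uniformly
   random prefix of a permutation, whose moment generating function is at most the
   one of sampling with replacement (exchanging two positions shows that the expected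
   prefix product only decreases by extending the prefix), so the Chernoff bounds
   apply; a union bound over the m resources and letting v tend to P* conclude. *)

From HB Require Import structures.
From mathcomp Require Import all_boot fingroup perm.
From Stdlib Require Import Reals Lra Psatz ClassicalEpsilon Classical.
From Coquelicot Require Import Coquelicot.

Set Implicit Arguments.
Unset Strict Implicit.
Unset Printing Implicit Defensive.

Open Scope R_scope.

(** * Exponential inequalities *)

Lemma le_of_derive_ge0 (g dg : R -> R) (x : R) : 0 <= x ->
  (forall y, is_derive g y (dg y)) -> (forall y, 0 <= y -> 0 <= dg y) ->
  g 0 <= g x.
Proof.
move=> x_ge0 g_der dg_ge0.
have [->|x_neq0] := Req_dec x 0; first lra.
have [c [c_in g_mvt]] : exists c, Rmin 0 x <= c <= Rmax 0 x /\ g x - g 0 = dg c * (x - 0).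
  apply: MVT_gen => [y _|y _]; first exact: g_der.
  apply/continuity_pt_filterlim/(@ex_derive_continuous R_AbsRing R_NormedModule).
  by eexists; apply: g_der.
rewrite Rmin_left in c_in; last lra.
have : 0 <= dg c * (x - 0) by apply: Rmult_le_pos; [apply: dg_ge0|]; lra.
lra.
Qed.

Lemma exp_opp_le_quadratic (t : R) : 0 <= t -> exp (- t) <= 1 - t + t ^ 2 / 2.
Proof.
move=> t_ge0.
have : 1 - 0 + 0 ^ 2 / 2 - exp (- 0) <= 1 - t + t ^ 2 / 2 - exp (- t).
  apply: (le_of_derive_ge0 (g := fun y => 1 - y + y ^ 2 / 2 - exp (- y))
    (dg := fun y => -1 + y + exp (- y))) => // [y|y _].
  - by auto_derive => //=; lra.
  - by have := exp_ineq1_le (- y); lra.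
rewrite Ropp_0 exp_0; lra.
Qed.

Lemma cubic_le_exp_opp (t : R) : 0 <= t -> 1 - t + t ^ 2 / 2 - t ^ 3 / 6 <= exp (- t).
Proof.
move=> t_ge0.
have : exp (- 0) - (1 - 0 + 0 ^ 2 / 2 - 0 ^ 3 / 6) <=
       exp (- t) - (1 - t + t ^ 2 / 2 - t ^ 3 / 6).
  apply: (le_of_derive_ge0 (g := fun y => exp (- y) - (1 - y + y ^ 2 / 2 - y ^ 3 / 6))
    (dg := fun y => - exp (- y) + 1 - y + y ^ 2 / 2)) => // [y|y].
  - by auto_derive => //=; lra.
  - by move/exp_opp_le_quadratic; lra.
rewrite Ropp_0 exp_0; lra.
Qed.

Lemma exp_le_quadratic (t : R) : 0 <= t <= 1 / 2 -> exp t <= 1 + t + 2 / 3 * t ^ 2.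
Proof.
move=> t_bnd; set B := 1 + t + 2 / 3 * t ^ 2; set C := 1 - t + t ^ 2 / 2 - t ^ 3 / 6.
have C_le : C <= exp (- t) := cubic_le_exp_opp (proj1 t_bnd).
have BC_ge1 : 1 <= B * C.
  have -> : B * C = 1 + t ^ 2 * ((1 - t) ^ 2 / 6 - t ^ 3 / 9) by rewrite /B /C; field.
  have : 0 <= t ^ 2 * ((1 - t) ^ 2 / 6 - t ^ 3 / 9) by apply: Rmult_le_pos; nra.
  lra.
have B_ge0 : 0 <= B by rewrite /B; nra.
have exp_gt0 := exp_pos t.
have <- : B * (exp t * exp (- t)) = B by rewrite -exp_plus Rplus_opp_r exp_0; ring.
have : exp t * C <= exp t * exp (- t) by apply: Rmult_le_compat_l; lra.
nra.
Qed.

Lemma exp_mul_le_chord (l c : R) : 0 <= c <= 1 -> exp (l * c) <= 1 + c * (exp l - 1).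
Proof.
move=> c_bnd; set u := l * c.
have tangent_l : exp u * (1 + (l - u)) <= exp l.
  have -> : exp l = exp u * exp (l - u) by rewrite -exp_plus; congr exp; ring.
  by apply: Rmult_le_compat_l; [apply/Rlt_le/exp_pos | apply: exp_ineq1_le].
have tangent_0 : exp u * (1 - u) <= 1.
  have exp_inv : exp u * exp (- u) = 1 by rewrite -exp_plus Rplus_opp_r exp_0.
  rewrite -[X in _ <= X]exp_inv; apply: Rmult_le_compat_l; first exact/Rlt_le/exp_pos.
  by have := exp_ineq1_le (- u); lra.
have -> : exp u = c * (exp u * (1 + (l - u))) + (1 - c) * (exp u * (1 - u)) by rewrite /u; ring.
nra.
Qed.

Lemma RplusA : associative Rplus. Proof. by move=> *; rewrite Rplus_assoc. Qed.
Lemma RmultA : associative Rmult. Proof. by move=> *; rewrite Rmult_assoc. Qed.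
HB.instance Definition _ := Monoid.isComLaw.Build R R0 Rplus RplusA Rplus_comm Rplus_0_l.
HB.instance Definition _ := Monoid.isComLaw.Build R R1 Rmult RmultA Rmult_comm Rmult_1_l.
HB.instance Definition _ := Monoid.isMulLaw.Build R R0 Rmult Rmult_0_l Rmult_0_r.
HB.instance Definition _ :=
  Monoid.isAddLaw.Build R Rmult Rplus Rmult_plus_distr_r Rmult_plus_distr_l.

Lemma sumR_le (I : finType) (P : pred I) (F G : I -> R) :
  (forall i, P i -> F i <= G i) ->
  \big[Rplus/R0]_(i | P i) F i <= \big[Rplus/R0]_(i | P i) G i.
Proof.
move=> le_FG; apply: (big_ind2 (fun a b => a <= b)) => //; first exact: Rle_refl.
by move=> *; apply: Rplus_le_compat.
Qed.

Lemma sumR_ge0 (I : finType) (P : pred I) (F : I -> R) :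
  (forall i, P i -> 0 <= F i) -> 0 <= \big[Rplus/R0]_(i | P i) F i.
Proof.
move=> F_ge0; apply: (big_ind (fun a => 0 <= a)) => //; first exact: Rle_refl.
by move=> *; apply: Rplus_le_le_0_compat.
Qed.

Lemma prodR_ge0 (I : finType) (P : pred I) (F : I -> R) :
  (forall i, P i -> 0 <= F i) -> 0 <= \big[Rmult/R1]_(i | P i) F i.
Proof.
move=> F_ge0; apply: (big_ind (fun a => 0 <= a)) => //; first exact: Rle_0_1.
by move=> *; apply: Rmult_le_pos.
Qed.

Lemma sumR_sub_le (I : finType) (P : pred I) (F : I -> R) :
  (forall i, 0 <= F i) -> \big[Rplus/R0]_(i | P i) F i <= \big[Rplus/R0]_i F i.
Proof.
move=> F_ge0; rewrite [X in _ <= X](bigID P) /= -[X in X <= _]Rplus_0_r.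
by apply: Rplus_le_compat_l; apply: sumR_ge0.
Qed.

Lemma sumR_const_ord (n : nat) (c : R) : \rsum_(i < n) c = INR n * c.
Proof.
elim: n => [|n IH]; first by rewrite big_ord0 /=; ring.
by rewrite big_ord_recr IH S_INR /=; ring.
Qed.

Lemma INR_sum (I : finType) (P : pred I) (F : I -> nat) :
  INR (\sum_(i | P i) F i) = \big[Rplus/R0]_(i | P i) INR (F i).
Proof. exact: (big_morph INR plus_INR (erefl (INR 0))). Qed.

Lemma INR_card (T : finType) (P : pred T) : INR #|P| = \big[Rplus/R0]_(x | P x) 1.
Proof. by rewrite -sum1_card INR_sum. Qed.

Lemma pboolP (P : Prop) : reflect P (pbool P).
Proof. by rewrite /pbool; case: excluded_middle_informative => ? ; constructor. Qed.

Lemma card_pbool (T : finType) (E : T -> Prop) :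
  #|[set x : T | pbool (E x)]| = #|(fun x => pbool (E x))|.
Proof. by rewrite cardsE. Qed.

Lemma card_event_mul_le_sum (T : finType) (E : T -> Prop) (g : T -> R) (K : R) :
  (forall x, 0 <= g x) -> (forall x, E x -> K <= g x) ->
  INR #|[set x : T | pbool (E x)]| * K <= \big[Rplus/R0]_(x : T) g x.
Proof.
move=> g_ge0 K_le_g.
rewrite card_pbool INR_card big_distrl /=.
apply: Rle_trans (sumR_sub_le (fun x => pbool (E x)) g_ge0).
by apply: sumR_le => x /pboolP Ex; rewrite Rmult_1_l; apply: K_le_g.
Qed.

Lemma card_le_union (m : nat) (T : finType) (E F0 : pred T) (F : 'I_m -> pred T) :
  (forall x, E x -> F0 x \/ exists i, F i x) ->
  (#|E| <= #|F0| + \sum_(i < m) #|F i|)%nat.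
Proof.
move=> cover.
have sum_ind (P : pred T) : (#|P| = \sum_x (P x : nat))%nat
  by rewrite -sum1_card big_mkcond.
rewrite sum_ind (sum_ind F0) (eq_bigr _ (fun i _ => sum_ind (F i))) exchange_big.
rewrite -big_split /=; apply: leq_sum => x _.
case Ex: (E x) => //=.
case: (cover x Ex) => [-> // | [i Fix]].
by rewrite (bigD1 i) //= Fix addnCA.
Qed.

Lemma card_perm_gt0 (n : nat) : 0 < INR #|[set: 'S_n]|.
Proof. by apply/lt_0_INR/ltP/card_gt0P; exists 1%g; rewrite inE. Qed.

Lemma prob_perm_union_le (n m : nat) (E F0 : 'S_n -> Prop) (F : 'I_m -> 'S_n -> Prop) :
  (forall s, E s -> F0 s \/ exists i, F i s) ->
  prob_perm E <= prob_perm F0 + \rsum_(i < m) prob_perm (F i).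
Proof.
move=> cover; rewrite /prob_perm /Rdiv -big_distrl /= -Rmult_plus_distr_r.
apply: Rmult_le_compat_r; first exact/Rlt_le/Rinv_0_lt_compat/card_perm_gt0.
rewrite !card_pbool -INR_sum -plus_INR; apply/le_INR/leP.
under eq_bigr => i _ do rewrite card_pbool.
by apply: card_le_union => s /pboolP /cover [/pboolP|[i /pboolP]]; [left | right; exists i].
Qed.

(** * Chernoff bounds for sampling without replacement *)

Section PrefixProduct.
Variables (n : nat) (y : 'I_n -> R).
Hypothesis y_ge0 : forall i, 0 <= y i.

Definition prefix_prod (s : nat) (sg : 'S_n) : R :=
  \big[Rmult/R1]_(t : 'I_n | (t < s)%nat) y (sg t).

Let mass (s : nat) : R := \big[Rplus/R0]_(sg : 'S_n) prefix_prod s sg.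

Let weight (s : nat) (t : 'I_n) : R :=
  \big[Rplus/R0]_(sg : 'S_n) (prefix_prod s sg * y (sg t)).

Lemma sum_perm_mulg (tau : 'S_n) (F : 'S_n -> R) :
  \big[Rplus/R0]_(sg : 'S_n) F sg = \big[Rplus/R0]_(sg : 'S_n) F (tau * sg)%g.
Proof. exact: (reindex_inj (mulgI tau)). Qed.

Lemma prefix_prod_succ (s : 'I_n) sg : prefix_prod s.+1 sg = prefix_prod s sg * y (sg s).
Proof.
rewrite /prefix_prod (bigD1 s) /= ?ltnS // Rmult_comm; congr (_ * _).
by apply: eq_bigl => t; rewrite ltnS ltn_neqAle andbC -(inj_eq val_inj).
Qed.

Lemma prefix_prod_mulg s (tau : 'S_n) sg :
  (forall u : 'I_n, (u < s)%nat -> tau u = u) -> prefix_prod s (tau * sg)%g = prefix_prod s sg.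
Proof. by move=> tau_id; apply: eq_bigr => u u_lt; rewrite permM tau_id. Qed.

Lemma sum_weight s : \rsum_(t < n) weight s t = (\rsum_(i < n) y i) * mass s.
Proof.
rewrite /weight exchange_big /= /mass big_distrr /=; apply: eq_bigr => sg _.
rewrite -big_distrr /= Rmult_comm; congr (_ * _).
exact/esym/(reindex_inj (@perm_inj _ sg)).
Qed.

(* Swapping two positions outside the prefix leaves the prefix product unchanged. *)
Lemma weight_outside_prefix (s t : 'I_n) : (s <= t)%nat -> weight s t = weight s s.
Proof.
move=> s_le_t; rewrite /weight (sum_perm_mulg (tperm s t)); apply: eq_bigr => sg _.
rewrite prefix_prod_mulg ?permM ?tpermR // => u u_lt; apply: tpermD.
- by apply: contraTneq u_lt => <-; rewrite ltnn.
- by apply: contraTneq u_lt => <-; rewrite -leqNgt.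
Qed.

(* Exchanging [t] and [s] and averaging gives a sum of terms [rest sg * (y (sg t) - y (sg s))^2]. *)
Lemma weight_inside_prefix (s t : 'I_n) : (t < s)%nat -> weight s s <= weight s t.
Proof.
move=> t_lt_s.
pose rest (sg : 'S_n) := \big[Rmult/R1]_(u : 'I_n | (u < s)%nat && (u != t)) y (sg u).
have prefix_split sg : prefix_prod s sg = y (sg t) * rest sg by rewrite /prefix_prod (bigD1 t).
have rest_swap sg : rest (tperm t s * sg)%g = rest sg.
  apply: eq_bigr => u /andP [u_lt u_neq]; rewrite permM tpermD // eq_sym //.
  by apply: contraTneq u_lt => ->; rewrite ltnn.
have rest_ge0 (sg : 'S_n) : 0 <= rest sg by apply: prodR_ge0.
have wt : weight s t = \big[Rplus/R0]_sg (rest sg * y (sg t) ^ 2).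
  by apply: eq_bigr => sg _; rewrite prefix_split /=; ring.
have wt_swap : weight s t = \big[Rplus/R0]_sg (rest sg * y (sg s) ^ 2).
  rewrite wt (sum_perm_mulg (tperm t s)).
  by apply: eq_bigr => sg _; rewrite rest_swap permM tpermL.
have ws : weight s s = \big[Rplus/R0]_sg (rest sg * (y (sg t) * y (sg s))).
  by apply: eq_bigr => sg _; rewrite prefix_split /=; ring.
suff : weight s s + weight s s <= weight s t + weight s t by lra.
rewrite {1}wt {1}wt_swap ws -!big_split /=; apply: sumR_le => sg _.
have := rest_ge0 sg; have := pow2_ge_0 (y (sg t) - y (sg s)); nra.
Qed.

Lemma mass_succ_le (s : 'I_n) : mass s.+1 <= (\rsum_(i < n) y i) / INR n * mass s.
Proof.
have n_gt0 : 0 < INR n by apply/lt_0_INR/ltP/(leq_ltn_trans (leq0n s) (ltn_ord s)).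
have -> : mass s.+1 = weight s s by apply: eq_bigr => sg _; rewrite prefix_prod_succ.
apply: (Rmult_le_reg_l (INR n)) => //.
have -> : INR n * ((\rsum_(i < n) y i) / INR n * mass s) = (\rsum_(i < n) y i) * mass s
  by field; lra.
rewrite -sum_weight -sumR_const_ord; apply: sumR_le => t _.
by case: (leqP s t) => [/weight_outside_prefix ->|]; [apply: Rle_refl|apply: weight_inside_prefix].
Qed.

(* Sampling without replacement is dominated by sampling with replacement for products. *)
Lemma sum_prefix_prod_le (s : nat) : (0 < n)%nat -> (s <= n)%nat ->
  \big[Rplus/R0]_(sg : 'S_n) prefix_prod s sg
  <= ((\rsum_(i < n) y i) / INR n) ^ s * INR #|[set: 'S_n]|.
Proof.
move=> n_gt0; elim: s => [_|s IH s_lt_n].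
  rewrite /= Rmult_1_l cardsT INR_card; apply/Req_le/eq_bigr => sg _.
  by rewrite /prefix_prod big_pred0.
have mean_ge0 : 0 <= (\rsum_(i < n) y i) / INR n.
  apply: Rmult_le_pos; first exact: sumR_ge0.
  exact/Rlt_le/Rinv_0_lt_compat/lt_0_INR/ltP.
apply: Rle_trans (mass_succ_le (Ordinal s_lt_n)) _.
by rewrite /= Rmult_assoc; apply/Rmult_le_compat_l/IH/ltnW.
Qed.

End PrefixProduct.

Lemma exp_pow (x : R) (s : nat) : exp x ^ s = exp (INR s * x).
Proof.
elim: s => [|s IH]; first by rewrite /= Rmult_0_l exp_0.
by rewrite S_INR /= IH -exp_plus; congr exp; ring.
Qed.

Lemma exp_le_exp x y : x <= y -> exp x <= exp y.
Proof. by case/Rle_lt_or_eq_dec => [/exp_increasing/Rlt_le|->] //; apply: Rle_refl. Qed.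

Section PermutationChernoff.
Variables (n s : nat) (B : R) (c : 'I_n -> R).
Hypotheses (n_gt0 : (0 < n)%nat) (s_le_n : (s <= n)%nat) (B_gt0 : 0 < B).
Hypothesis c_bnd : forall i, 0 <= c i <= B.

Definition prefix_sum (sg : 'S_n) : R := \big[Rplus/R0]_(t : 'I_n | (t < s)%nat) c (sg t).

Definition prefix_mean : R := (\rsum_(i < n) c i) / INR n * INR s.

Let INR_n_gt0 : 0 < INR n. Proof. exact/lt_0_INR/ltP. Qed.

Lemma prefix_mean_ge0 : 0 <= prefix_mean.
Proof.
apply: Rmult_le_pos; last exact: pos_INR.
apply: Rmult_le_pos; last exact/Rlt_le/Rinv_0_lt_compat.
by apply: sumR_ge0 => i _; case: (c_bnd i).
Qed.

Lemma sum_exp_prefix_sum_le (l : R) :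
  \big[Rplus/R0]_(sg : 'S_n) exp (l * prefix_sum sg)
  <= exp ((exp (l * B) - 1) * prefix_mean / B) * INR #|[set: 'S_n]|.
Proof.
have -> : \big[Rplus/R0]_sg exp (l * prefix_sum sg) =
          \big[Rplus/R0]_sg prefix_prod (fun i => exp (l * c i)) s sg.
  apply: eq_bigr => sg _; rewrite /prefix_sum big_distrr /=.
  exact: (big_morph exp exp_plus exp_0).
apply: Rle_trans (sum_prefix_prod_le (fun i => Rlt_le _ _ (exp_pos _)) n_gt0 s_le_n) _.
apply: Rmult_le_compat_r; first exact/Rlt_le/card_perm_gt0.
rewrite /prefix_mean.
have -> : (exp (l * B) - 1) * ((\rsum_(i < n) c i) / INR n * INR s) / B =
          INR s * ((exp (l * B) - 1) * ((\rsum_(i < n) c i) / B / INR n))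
  by field; lra.
rewrite -exp_pow; apply: pow_incr; split.
  apply: Rmult_le_pos; last exact/Rlt_le/Rinv_0_lt_compat.
  by apply: sumR_ge0 => i _; apply/Rlt_le/exp_pos.
apply: Rle_trans (exp_ineq1_le _).
apply: (Rmult_le_reg_l (INR n)) => //.
have -> : INR n * ((\rsum_(i < n) exp (l * c i)) / INR n) = \rsum_(i < n) exp (l * c i)
  by field; lra.
have -> : INR n * (1 + (exp (l * B) - 1) * ((\rsum_(i < n) c i) / B / INR n)) =
          \rsum_(i < n) (1 + c i / B * (exp (l * B) - 1))
  by rewrite big_split /= sumR_const_ord -!big_distrl /=; field; lra.
apply: sumR_le => i _; have [c_ge0 c_le] := c_bnd i.
have -> : l * c i = l * B * (c i / B) by field; lra.
apply: exp_mul_le_chord.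
by split; apply: (Rmult_le_reg_r B) => //; rewrite /Rdiv Rmult_assoc Rinv_l; lra.
Qed.

Lemma prob_perm_mul_le_mgf (E : 'S_n -> Prop) (l K : R) :
  (forall sg, E sg -> K <= exp (l * prefix_sum sg)) ->
  prob_perm E * K <= exp ((exp (l * B) - 1) * prefix_mean / B).
Proof.
move=> K_le; have N_gt0 := card_perm_gt0 n.
apply: (Rmult_le_reg_r (INR #|[set: 'S_n]|)) => //.
have -> : prob_perm E * K * INR #|[set: 'S_n]| = INR #|[set sg | pbool (E sg)]| * K
  by rewrite /prob_perm; move: (INR #|[set: 'S_n]|) N_gt0 (INR _) => N N_gt0 a; field; lra.
apply: Rle_trans (sum_exp_prefix_sum_le l).
by apply: card_event_mul_le_sum => sg; [apply/Rlt_le/exp_pos | apply: K_le].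
Qed.

Lemma prob_perm_prefix_sum_lt (th : R) : 0 <= th ->
  prob_perm (fun sg => prefix_sum sg < (1 - th) * prefix_mean)
  <= exp (- (th ^ 2 * prefix_mean / (2 * B))).
Proof.
move=> th_ge0; have mu_ge0 := prefix_mean_ge0.
have l_ge0 : 0 <= th / B by apply: Rmult_le_pos => //; apply/Rlt_le/Rinv_0_lt_compat.
set K := exp (- (th / B) * ((1 - th) * prefix_mean)).
apply: (Rmult_le_reg_r K); first exact: exp_pos.
apply: Rle_trans (prob_perm_mul_le_mgf (l := - (th / B)) _) _.
  by move=> sg lt_mu; apply: exp_le_exp; nra.
rewrite /K -exp_plus; apply: exp_le_exp.
have -> : - (th / B) * B = - th by field; lra.
have -> : - (th ^ 2 * prefix_mean / (2 * B)) + - (th / B) * ((1 - th) * prefix_mean) =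
          (- th + th ^ 2 / 2) * prefix_mean / B by field; lra.
apply: Rmult_le_compat_r; first exact/Rlt_le/Rinv_0_lt_compat.
by apply: Rmult_le_compat_r => //; have := exp_opp_le_quadratic th_ge0; lra.
Qed.

Lemma prob_perm_prefix_sum_gt (th M : R) : 0 <= th <= 1 / 2 -> prefix_mean <= M ->
  prob_perm (fun sg => (1 + th) * M < prefix_sum sg) <= exp (- (th ^ 2 * M / (3 * B))).
Proof.
move=> th_bnd mu_le_M; have mu_ge0 := prefix_mean_ge0.
have l_ge0 : 0 <= th / B by apply: Rmult_le_pos; [lra | apply/Rlt_le/Rinv_0_lt_compat].
set K := exp (th / B * ((1 + th) * M)).
apply: (Rmult_le_reg_r K); first exact: exp_pos.
apply: Rle_trans (prob_perm_mul_le_mgf (l := th / B) _) _.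
  by move=> sg gt_M; apply: exp_le_exp; nra.
rewrite /K -exp_plus; apply: exp_le_exp.
have -> : th / B * B = th by field; lra.
have -> : - (th ^ 2 * M / (3 * B)) + th / B * ((1 + th) * M) =
          (th + 2 / 3 * th ^ 2) * M / B by field; lra.
apply: Rmult_le_compat_r; first exact/Rlt_le/Rinv_0_lt_compat.
have exp_ge := exp_ineq1_le th; have exp_le := exp_le_quadratic th_bnd.
apply: Rle_trans (_ : (exp th - 1) * M <= _); first by apply: Rmult_le_compat_l; lra.
by apply: Rmult_le_compat_r; lra.
Qed.

End PermutationChernoff.

(** * The sampled problem *)

Lemma sample_fraction_bounds (eps : R) (L h : nat) :
  eps = / 2 ^ L -> (h < L)%nat -> 0 < 2 ^ h * eps <= 1 / 2.
Proof.
move=> -> /subnKC <-; set r := (L - h.+1)%nat.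
have pow_ge1 j : 1 <= 2 ^ j by apply: pow_R1_Rle; lra.
have -> : 2 ^ h * / 2 ^ (h.+1 + r) = / (2 * 2 ^ r).
  by rewrite -plusE pow_add /=; field; split; apply: pow_nonzero; lra.
have := pow_ge1 r; split; first by apply: Rinv_0_lt_compat; lra.
by rewrite /Rdiv Rmult_1_l; apply: Rinv_le_contravar; lra.
Qed.

Lemma theta_sq (eps : R) (h : nat) : 0 <= eps -> theta eps h ^ 2 = eps / (2 * 2 ^ h).
Proof.
move=> eps_ge0; rewrite /theta /= Rmult_1_r sqrt_sqrt addn1 //=.
by apply: Rmult_le_pos => //; apply/Rlt_le/Rinv_0_lt_compat/Rmult_lt_0_compat;
  [lra | apply: pow_lt; lra].
Qed.

Lemma in_G_dom_ge0 (k : nat) (dom : Vec k -> Prop) (f : Vec k -> R) :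
  in_G dom f -> forall x, dom x -> forall j, 0 <= x j.
Proof. by case=> [_ [_ [_ [_ [dom_ge0 _]]]]]. Qed.

Lemma in_G_zero (k : nat) (dom : Vec k -> Prop) (f : Vec k -> R) :
  in_G dom f -> dom (fun _ => 0) /\ f (fun _ => 0) = 0.
Proof. by case=> [_ [_ [_ [_ [_ zero]]]]]. Qed.

Lemma mv_zero (m k : nat) (A : Mat m k) i : mv A (fun _ => 0) i = 0.
Proof. by apply: big1 => j _; ring. Qed.

Lemma mv_ge0 (m k : nat) (A : Mat m k) (x : Vec k) i :
  (forall j, 0 <= A i j) -> (forall j, 0 <= x j) -> 0 <= mv A x i.
Proof. by move=> A_ge0 x_ge0; apply: sumR_ge0 => j _; apply: Rmult_le_pos. Qed.

Section Sampling.
Variables (m k n : nat) (b : 'I_m -> R).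
Variables (dom : 'I_n -> Vec k -> Prop) (f : 'I_n -> Vec k -> R) (A : 'I_n -> Mat m k).
Hypothesis HG : forall t, in_G (dom t) (f t).
Hypothesis HA : forall t i j, 0 <= A t i j.

Definition nonneg_feasible (x : 'I_n -> Vec k) : Prop :=
  [/\ forall t, dom t (x t), forall t, 0 <= f t (x t)
    & forall i, \rsum_(t < n) mv (A t) (x t) i <= b i].

(* Replacing by [0] every [x t] of negative value keeps feasibility since [A t >= 0]. *)
Lemma offline_nonneg_solution (Pstar V : R) :
  is_lub (offline_values dom f A b) Pstar -> V < Pstar ->
  exists2 x, nonneg_feasible x & V < \rsum_(t < n) f t (x t).
Proof.
move=> [_ lub] V_lt.
have [v0 [[x [x_dom [x_feas ->]]] V_lt_v0]] : exists v0, offline_values dom f A b v0 /\ V < v0.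
  apply: NNPP => no_v0; suff : Pstar <= V by lra.
  by apply: lub => w w_val; apply: Rnot_lt_le => V_lt_w; apply: no_v0; exists w.
pose x' t := if Rlt_dec (f t (x t)) 0 then (fun _ : 'I_k => 0) else x t.
have x'_spec t : [/\ dom t (x' t), 0 <= f t (x' t), f t (x t) <= f t (x' t)
                  & forall i, mv (A t) (x' t) i <= mv (A t) (x t) i].
  rewrite /x'; case: Rlt_dec => [f_lt0|f_ge0] /=; last first.
    by split=> [|||i]; [exact: x_dom | lra | apply: Rle_refl | apply: Rle_refl].
  have [dom0 f0] := in_G_zero (HG t); rewrite f0; split=> //; try lra.
  by move=> i; rewrite mv_zero; apply: mv_ge0 => // j; apply: in_G_dom_ge0 (HG t) _ (x_dom t) j.
have x'_feas : nonneg_feasible x'.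
  split=> [t|t|i]; try by case: (x'_spec t).
  by apply: Rle_trans (x_feas i); apply: sumR_le => t _; case: (x'_spec t) => _ _ _; apply.
exists x' => //.
by apply: Rlt_le_trans V_lt_v0 _; apply: sumR_le => t _; case: (x'_spec t).
Qed.

Variables (eps : R) (L h s : nat).
Hypotheses (eps_def : eps = / 2 ^ L) (h_lt_L : (h < L)%nat).
Hypothesis s_def : INR s = 2 ^ h * INR n * eps.

Let p := 2 ^ h * eps.
Let th := theta eps h.

Let p_bnd : 0 < p <= 1 / 2. Proof. exact: sample_fraction_bounds eps_def h_lt_L. Qed.

Let eps_gt0 : 0 < eps.
Proof. by rewrite eps_def; apply/Rinv_0_lt_compat/pow_lt; lra. Qed.

Let th_bnd : 0 <= th <= 1 / 2.
Proof.
have th_ge0 : 0 <= th := sqrt_pos _.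
suff : th ^ 2 <= 1 / 4 by nra.
rewrite /th theta_sq; last lra.
have pow_ge1 : 1 <= 2 ^ h by apply: pow_R1_Rle; lra.
apply: (Rmult_le_reg_r (2 * 2 ^ h)); first lra.
rewrite /Rdiv Rmult_assoc Rinv_l; last lra.
have := p_bnd; rewrite /p; nra.
Qed.

Let th_sq_p : th ^ 2 * p = eps ^ 2 / 2.
Proof.
rewrite /th theta_sq /p; last lra.
by field; apply: pow_nonzero; lra.
Qed.

Lemma sample_sum_prefix (g : 'I_n -> R) :
  \rsum_(t < n | pbool (INR t < 2 ^ h * INR n * eps)) g t =
  \big[Rplus/R0]_(t : 'I_n | (t < s)%nat) g t.
Proof.
apply: eq_bigl => t; rewrite -s_def.
by apply/pboolP/ltP => [/INR_lt | /lt_INR].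
Qed.

Lemma sample_values_of_prefix_sums (x : 'I_n -> Vec k) (sg : 'S_n) (v : R) :
  (forall t, dom t (x t)) ->
  (1 - th) * (p * v) <= prefix_sum s (fun t => f t (x t)) sg ->
  (forall i, prefix_sum s (fun t => mv (A t) (x t) i) sg <= (1 + th) * (p * b i)) ->
  exists2 w, sample_values dom f A b eps h sg w & v <= w.
Proof.
move=> x_dom value_lb cons_ub; have [p_gt0 _] := p_bnd; have [th_ge0 th_le] := th_bnd.
exists (/ (p * (1 - th)) * prefix_sum s (fun t => f t (x t)) sg).
  exists (fun t => x (sg t)); split=> [t _ //|]; split=> [i|]; last first.
    by rewrite sample_sum_prefix.
  rewrite sample_sum_prefix -/p -/th.
  apply: (Rmult_le_reg_l (p * (1 + th))); first nra.
  rewrite -Rmult_assoc Rinv_r; last nra.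
  by have := cons_ub i; rewrite /prefix_sum; lra.
apply: (Rmult_le_reg_l (p * (1 - th))); first nra.
rewrite -Rmult_assoc Rinv_r; last nra.
lra.
Qed.

Variables (Pstar gamma : R).
Hypotheses (n_gt0 : (0 < n)%nat) (b_gt0 : forall i, 0 < b i).
Hypotheses (Pstar_gt0 : 0 < Pstar) (gamma_gt0 : 0 < gamma).
Hypothesis gamma_cons :
  forall t x, dom t x -> 0 <= f t x -> forall i, mv (A t) x i / b i <= gamma.
Hypothesis gamma_value : forall t x, dom t x -> f t x <= gamma * Pstar.

Let s_le_n : (s <= n)%nat.
Proof.
apply/leP/INR_le; rewrite s_def.
have [_ p_le] := p_bnd; have n_ge0 := pos_INR n; rewrite /p in p_le; nra.
Qed.

Let prefix_mean_eq (c : 'I_n -> R) : prefix_mean s c = p * \rsum_(t < n) c t.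
Proof.
rewrite /prefix_mean s_def /p; field.
by apply/not_0_INR/eqP; rewrite -lt0n.
Qed.

Lemma sample_sup_lt_tail (V0 : R) (x : 'I_n -> Vec k) (sg : 'S_n) :
  (forall t, dom t (x t)) -> V0 < \rsum_(t < n) f t (x t) ->
  (forall w, sample_values dom f A b eps h sg w -> w <= V0) ->
  prefix_sum s (fun t => f t (x t)) sg < (1 - th) * (p * \rsum_(t < n) f t (x t)) \/
  exists i, (1 + th) * (p * b i) < prefix_sum s (fun t => mv (A t) (x t) i) sg.
Proof.
move=> x_dom V0_lt small_values; apply: NNPP => no_tail.
have [w w_val v_le_w] : exists2 w, sample_values dom f A b eps h sg w &
    \rsum_(t < n) f t (x t) <= w.
  apply: sample_values_of_prefix_sums => // [|i];
    apply: Rnot_lt_le => tail; apply: no_tail; [left | right; exists i] => //.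
by have := small_values w w_val; lra.
Qed.

Lemma prob_sample_sup_lt_le (V0 : R) (x : 'I_n -> Vec k) :
  nonneg_feasible x -> V0 < \rsum_(t < n) f t (x t) ->
  (forall sg, sup_lt (sample_values dom f A b eps h sg) Pstar ->
     forall w, sample_values dom f A b eps h sg w -> w <= V0) ->
  prob_perm (fun sg => sup_lt (sample_values dom f A b eps h sg) Pstar)
  <= exp (- (eps ^ 2 * (\rsum_(t < n) f t (x t)) / (4 * gamma * Pstar)))
     + INR m * exp (- (eps ^ 2 / (6 * gamma))).
Proof.
move=> [x_dom x_val x_cons] V0_lt small_values.
set v := \rsum_(t < n) f t (x t) in V0_lt *.
pose c t := f t (x t); pose d i t := mv (A t) (x t) i.
have [p_gt0 _] := p_bnd; have [th_ge0 th_le] := th_bnd.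
have c_bnd t : 0 <= c t <= gamma * Pstar by split; [apply: x_val | apply: gamma_value].
have c_mean : prefix_mean s c = p * v := prefix_mean_eq c.
have d_bnd i t : 0 <= d i t <= gamma * b i.
  split; first by apply: mv_ge0 => // j; apply: in_G_dom_ge0 (HG t) _ (x_dom t) j.
  have := gamma_cons (x_dom t) (x_val t) i; have := b_gt0 i; rewrite /d.
  move=> b_pos /(Rmult_le_compat_r (b i)); rewrite /Rdiv Rmult_assoc Rinv_l; lra.
have d_mean i : prefix_mean s (d i) <= p * b i.
  by rewrite prefix_mean_eq; apply: Rmult_le_compat_l; [lra | apply: x_cons].
apply: Rle_trans (prob_perm_union_le
  (F0 := fun sg => prefix_sum s c sg < (1 - th) * prefix_mean s c)
  (F := fun i sg => (1 + th) * (p * b i) < prefix_sum s (d i) sg) _) _.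
  by move=> sg /small_values; rewrite c_mean; apply: sample_sup_lt_tail.
have gP_gt0 : 0 < gamma * Pstar by apply: Rmult_lt_0_compat.
apply: Rplus_le_compat.
  apply: Rle_trans (prob_perm_prefix_sum_lt n_gt0 s_le_n gP_gt0 c_bnd th_ge0) _.
  apply/exp_le_exp/Ropp_le_contravar/Req_le.
  have -> : th ^ 2 * prefix_mean s c = eps ^ 2 / 2 * v by rewrite c_mean -th_sq_p; ring.
  by field; lra.
rewrite -sumR_const_ord; apply: sumR_le => i _.
have gb_gt0 : 0 < gamma * b i by apply: Rmult_lt_0_compat.
apply: Rle_trans (prob_perm_prefix_sum_gt n_gt0 s_le_n gb_gt0 (d_bnd i) th_bnd (d_mean i)) _.
apply/exp_le_exp/Ropp_le_contravar/Req_le.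
have -> : th ^ 2 * (p * b i) = eps ^ 2 / 2 * b i by rewrite -th_sq_p; ring.
by field; have := b_gt0 i; lra.
Qed.

End Sampling.

Lemma sup_lt_uniform (T : finType) (E : T -> Prop) (S : T -> R -> Prop) (P : R) :
  (forall x, E x -> sup_lt (S x) P) ->
  exists2 V0, V0 < P & forall x, E x -> forall v, S x v -> v <= V0.
Proof.
move=> sup_lt_E.
suff [V0 V0_lt bound] : exists2 V0, V0 < P &
    forall x, x \in enum T -> E x -> forall v, S x v -> v <= V0.
  by exists V0 => // x Ex; apply: bound; rewrite ?mem_enum.
elim: (enum T) => [|y l [V0 V0_lt bound]]; first by exists (P - 1) => //; lra.
have [Ey|notEy] := classic (E y); last first.
  by exists V0 => // x; rewrite in_cons => /orP [/eqP -> /notEy|] //; apply: bound.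
have [c [c_lt c_bound]] := sup_lt_E y Ey.
exists (Rmax V0 c) => [|x]; first exact: Rmax_lub_lt.
rewrite in_cons => /orP [/eqP -> _ v /c_bound|x_in Ex v /(bound x x_in Ex)] v_le.
- exact: Rle_trans v_le (Rmax_r _ _).
- exact: Rle_trans v_le (Rmax_l _ _).
Qed.

Lemma le_exp_opp_of_forall_lt (q a V0 P : R) : 0 < a -> V0 < P ->
  (forall V, V0 <= V < P -> q <= exp (- (a * V))) -> q <= exp (- (a * P)).
Proof.
move=> a_gt0 V0_lt q_le; apply: Rnot_lt_le => lt_q.
have q_gt0 : 0 < q by apply: Rlt_trans (exp_pos _) lt_q.
set u := - ln q / a.
have au : a * u = - ln q by rewrite /u; field; lra.
have lnq_gt : - (a * P) < ln q.
  by rewrite -[X in X < _]ln_exp; apply: ln_increasing; [apply: exp_pos | ].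
have u_lt : u < P by apply: (Rmult_lt_reg_l a) => //; lra.
set V := Rmax V0 ((P + u) / 2).
have V_lt : V < P by apply: Rmax_lub_lt; lra.
have u_lt_V : u < V by apply: Rlt_le_trans (Rmax_r _ _); lra.
have : exp (- (a * V)) < q.
  rewrite -[X in _ < X]exp_ln //; apply: exp_increasing.
  by have := Rmult_lt_compat_l a _ _ a_gt0 u_lt_V; lra.
by have := q_le V (conj (Rmax_l _ _) V_lt); lra.
Qed.

Theorem mainTheorem4
  (m k n : nat) (Hm : (0 < m)%nat) (Hk : (0 < k)%nat) (Hn : (0 < n)%nat)
  (b : 'I_m -> R) (Hb : forall i, 0 < b i)
  (dom : 'I_n -> Vec k -> Prop) (f : 'I_n -> Vec k -> R)
  (HG : forall t, in_G (dom t) (f t))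
  (A : 'I_n -> Mat m k) (HA : forall t i j, 0 <= A t i j)
  (Pstar : R) (HPstar : is_lub (offline_values dom f A b) Pstar)
  (HPpos : 0 < Pstar)
  (gamma : R) (Hgamma : 0 < gamma)
  (Hgamma1 : forall t x, dom t x -> 0 <= f t x ->
               forall i, mv (A t) x i / b i <= gamma)
  (Hgamma2 : forall t x, dom t x -> f t x <= gamma * Pstar)
  (eps : R) (Heps : 0 < eps < 1)
  (L : nat) (HL : eps = / 2 ^ L)
  (Hneps : exists N : nat, INR n * eps = INR N)
  (h : nat) (Hh : (h < L)%nat) :
  prob_perm (fun sigma => sup_lt (sample_values dom f A b eps h sigma) Pstar)
  <= exp (- (eps ^ 2 / (4 * gamma))) + INR m * exp (- (eps ^ 2 / (6 * gamma))).
Proof.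
have [N HN] := Hneps.
have s_def : INR (2 ^ h * N) = 2 ^ h * INR n * eps.
  by rewrite mult_INR pow_INR -HN Rmult_assoc.
have [V0 V0_lt small_values] := sup_lt_uniform
  (fun sg (H : sup_lt (sample_values dom f A b eps h sg) Pstar) => H).
set a := eps ^ 2 / (4 * gamma * Pstar).
have a_gt0 : 0 < a by apply: Rdiv_lt_0_compat; [apply: pow_lt | apply: Rmult_lt_0_compat]; lra.
have -> : eps ^ 2 / (4 * gamma) = a * Pstar by rewrite /a; field; lra.
suff : prob_perm (fun sg => sup_lt (sample_values dom f A b eps h sg) Pstar)
       - INR m * exp (- (eps ^ 2 / (6 * gamma))) <= exp (- (a * Pstar)) by lra.
(* P* is only a supremum of offline values, hence the limit V -> P*. *)
apply: (le_exp_opp_of_forall_lt a_gt0 V0_lt) => V [V0_le V_lt].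
have [x x_feas V_lt_v] := offline_nonneg_solution HG HA HPstar V_lt.
have := prob_sample_sup_lt_le HG HA HL Hh s_def Hn Hb HPpos Hgamma Hgamma1 Hgamma2 x_feas
  (Rle_lt_trans _ _ _ V0_le V_lt_v) small_values.
move: (\rsum_(t < n) f t (x t)) V_lt_v => v V_lt_v.
suff : exp (- (eps ^ 2 * v / (4 * gamma * Pstar))) <= exp (- (a * V)) by lra.
apply/exp_le_exp/Ropp_le_contravar.
have -> : eps ^ 2 * v / (4 * gamma * Pstar) = a * v by rewrite /a; field; lra.
by apply: Rmult_le_compat_l; lra.
Qed.
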